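(* There is no morphism $\pi:\mathbb{P}^1_{\mathbb{C}}\to\mathbb{P}^1_{\mathbb{C}}$ of degree $6$ for which there exist three distinct points $p,q,r\in\mathbb{P}^1$ such that $\pi$ has ramification index $(3,3)$ at $p$, ramification index $(2,2,2)$ at $q$, and ramification index $(3,2,1)$ at $r$.
   Context: A morphism $\pi:\mathbb{P}^1\to\mathbb{P}^1$ is said to have ramification index $(n_1,\dots,n_k)$ at a point $x_0$ if $\pi^{-1}(x_0)$ consists of exactly $k$ points at which $\pi$ has local multiplicities $n_1,\dots,n_k$ (so $n_1+\dots+n_k=\deg\pi$). *)

From HB Require Import structures.
From mathcomp Require Import all_boot all_order all_algebra.
From mathcomp Require Import complex.
From mathcomp Require Import Rstruct.
Import ComplexField.
From Stdlib Require Rdefinitions.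
Set Implicit Arguments. Unset Strict Implicit. Unset Printing Implicit Defensive.
Import Order.TTheory GRing.Theory Num.Theory.
Local Open Scope ring_scope.

Notation CC := (complex Rdefinitions.R).

(* A point of P^1(C): Some z is the affine point z, None is the point at infinity. *)
Definition P1 := option CC.

(* A morphism P^1 -> P^1 of degree d is given (up to a common nonzero scalar)
   by a pair of coprime polynomials (P, Q) with max(deg P, deg Q) = d; it is the
   map [x0 : x1] |-> [F(x0,x1) : G(x0,x1)] with F, G the degree-d
   homogenisations of P, Q, i.e. affinely z |-> P(z)/Q(z). *)
Definition is_morphism_of_degree (P Q : {poly CC}) (d : nat) : Prop :=
  coprimep P Q /\ maxn (size P) (size Q) = d.+1.

(* The (dehomogenised) equation of the fibre over the target point w:
   for w = a : b*P - a*Q with (a:b) = (a:1), i.e. P - a Q; for w = infinity : Q. *)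
Definition fibre_poly (P Q : {poly CC}) (w : P1) : {poly CC} :=
  match w with
  | Some a => P - a%:P * Q
  | None => Q
  end.

(* Local multiplicity of the morphism (P,Q) of degree d at the source point x,
   counted in the fibre over w (it is 0 iff x is not in the fibre over w):
   the order of vanishing at x of the degree-d binary form b F - a G. *)
Definition local_mult (P Q : {poly CC}) (d : nat) (w x : P1) : nat :=
  match x with
  | Some z => mup z (fibre_poly P Q w)
  | None => subn d (size (fibre_poly P Q w)).-1
  end.

Definition has_ramification (P Q : {poly CC}) (d : nat) (w : P1) (ns : seq nat) : Prop :=
  exists xs : seq P1,
    [/\ uniq xs,
        (forall x : P1, x \in xs <-> (0 < local_mult P Q d w x)%N) &
        perm_eq [seq local_mult P Q d w x | x <- xs] ns].

(* The fibres over p, q and r are cut out by binary sextics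
     F_p = c_p (l_x1 l_x2)^3,  F_q = c_q (l_y1 l_y2 l_y3)^2,  F_r = c_r l_z1^3 l_z2^2 l_z3,
   where l_x is the linear form vanishing at x.  Any three fibres lie in a pencil,
   F_r = al F_p + be F_q with al <> 0, and distinct fibres are disjoint.  In the
   coordinate s placing x1, x2, z1 at 0, infinity, 1 the pencil relation reads
     C (s - 1)^3 (s - z)^2 (s - w) = A s^3 + B T(s)^2   with T a cubic,
   and comparing the seven coefficients (after the shift s = 1 + u) forces z = 0,
   i.e. z2 = x1: the point z2 would lie in the fibres over both r and p. *)

From mathcomp Require Import all_boot all_order all_algebra.
From mathcomp Require Import complex Rstruct.
From mathcomp Require Import ring.
Import ComplexField.
Import GRing.Theory Num.Theory.
Set Implicit Arguments.
Unset Strict Implicit.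
Unset Printing Implicit Defensive.
Local Open Scope ring_scope.

Lemma perm_map_lift (T1 T2 : eqType) (f : T1 -> T2) (s : seq T1) (t : seq T2) :
  perm_eq (map f s) t -> exists2 s', perm_eq s s' & map f s' = t.
Proof.
elim: t s => [|a t IHt] s hst.
  by exists s => //; apply/nilP; rewrite /nilp (perm_size hst).
have : a \in map f s by rewrite (perm_mem hst) mem_head.
case/mapP => x xs eax; subst a.
have [s' hs' <-] : exists2 s', perm_eq (rem x s) s' & map f s' = t.
  apply: IHt; rewrite -(perm_cons (f x)) -map_cons (perm_trans _ hst) //.
  by rewrite perm_map // perm_sym perm_to_rem.
by exists (x :: s'); rewrite // (perm_trans (perm_to_rem xs)) // perm_cons.
Qed.

Lemma size_le_of_coef_eq0 (R : nzSemiRingType) (u : {poly R}) n :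
  (size u <= n.+1)%N -> u`_n = 0 -> (size u <= n)%N.
Proof.
move=> hu hun; apply/leq_sizeP => j; rewrite leq_eqVlt => /orP[/eqP <- //|hj].
exact: (leq_sizeP _ _ hu).
Qed.

Section CharacteristicZero.
Variable R : numFieldType.

Lemma poly_fun_eq0 (p : {poly R}) : (forall u, p.[u] = 0) -> p = 0.
Proof.
move=> hp; apply: (@roots_geq_poly_eq0 _ _ [seq i%:R | i <- iota 0 (size p)]).
- by apply/allP => x _; apply/eqP/hp.
- by rewrite map_inj_uniq ?iota_uniq //; apply: mulrIn; rewrite oner_eq0.
- by rewrite size_map size_iota.
Qed.

Lemma cubic_pencil_system (m be : R) : m != 0 ->
  192 * be ^+ 2 + 96 * m * be + 9 * m ^+ 2 + 192 * m = 0 ->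
  16 * be ^+ 3 + 6 * m * be ^+ 2 - m ^+ 2 - 16 * m = 0 -> be = -1.
Proof.
move=> hm h4 h3.
have quad : 8 * be ^+ 2 + (3 * m + 64) * be + 4 * (m + 16) = 0.
  apply: (mulfI hm); rewrite mulr0.
  have -> : m * (8 * be ^+ 2 + (3 * m + 64) * be + 4 * (m + 16)) =
    (-1/48) * (192 * (16 * be ^+ 3 + 6 * m * be ^+ 2 - m ^+ 2 - 16 * m)
               - 16 * be * (192 * be ^+ 2 + 96 * m * be + 9 * m ^+ 2 + 192 * m)) by field.
  by rewrite h4 h3; ring.
have lin : 8 * (m - 64) * be + (3 * m ^+ 2 + 32 * m - 512) = 0.
  have -> : 8 * (m - 64) * be + (3 * m ^+ 2 + 32 * m - 512) =
    (1/3) * ((192 * be ^+ 2 + 96 * m * be + 9 * m ^+ 2 + 192 * m)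
       - 24 * (8 * be ^+ 2 + (3 * m + 64) * be + 4 * (m + 16))) by field.
  by rewrite h4 quad; ring.
(* the resultant of [quad] and [lin] in [be] is a multiple of [(m + 8)^3] *)
have hm8 : m = -8.
  have /eqP : (m + 8) ^+ 3 = 0.
    have -> : (m + 8) ^+ 3 = (1/512) * (8 * (m - 64) ^+ 2 * (8 * be ^+ 2 + (3 * m + 64) * be + 4 * (m + 16))
      - (8 * (m - 64) * be + (3 * m ^+ 2 + 32 * m - 512)) *
        (8 * (m - 64) * be - (3 * m ^+ 2 + 32 * m - 512) + (3 * m + 64) * (m - 64))) by field.
    by rewrite quad lin; ring.
  by rewrite expf_eq0 /= addr_eq0 => /eqP.
have h576 : (-576 : R) != 0 by rewrite oppr_eq0 pnatr_eq0.
rewrite hm8 in lin; apply: (mulfI h576).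
by rewrite -[RHS]addr0 -lin; ring.
Qed.

Lemma cubic_pencil_double_root (a b c m p q be ga : R) : a != 0 -> c != 0 ->
  (forall u, b * (u ^+ 3 + q * u ^+ 2 + p * u + m) ^+ 2 + a * (1 + u) ^+ 3
             = c * u ^+ 3 * (u - be) ^+ 2 * (u - ga)) -> be = -1.
Proof.
move=> ha hc H.
have /polyP coef_eq0 : Poly [:: - b * m ^+ 2 - a; -2 * b * m * p - 3 * a;
    - b * (p ^+ 2 + 2 * m * q) - 3 * a; - c * be ^+ 2 * ga - b * (2 * m + 2 * p * q) - a;
    c * (be ^+ 2 + 2 * be * ga) - b * (q ^+ 2 + 2 * p); - c * (2 * be + ga) - 2 * b * q;
    c - b] = 0.
  apply: poly_fun_eq0 => u; rewrite horner_Poly /=.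
  transitivity (c * u ^+ 3 * (u - be) ^+ 2 * (u - ga)
    - (b * (u ^+ 3 + q * u ^+ 2 + p * u + m) ^+ 2 + a * (1 + u) ^+ 3)); first by ring.
  by rewrite H subrr.
move: (coef_eq0 0%N) (coef_eq0 1%N) (coef_eq0 2%N) (coef_eq0 3%N) (coef_eq0 4%N)
  (coef_eq0 5%N) (coef_eq0 6%N); rewrite !coef_Poly !coef0 /= => e0 e1 e2 e3 e4 e5 e6.
have by_multiple (k x y z : R) : z = 0 -> x - y = k * z -> x = y.
  by move=> z0 /eqP; rewrite z0 mulr0 subr_eq0 => /eqP.
have cb : c = b by apply: (by_multiple 1 _ _ _ e6); ring.
subst c.
have ea : a = - b * m ^+ 2 by apply: (by_multiple (-1) _ _ _ e0); ring.
subst a.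
have hm : m != 0 by apply: contraNneq ha => ->; rewrite expr0n mulr0.
have hbm : b * m != 0 by rewrite mulf_neq0 //; apply: contraNneq hc => ->.
have hp : p = 3 * m / 2.
  by apply: (mulfI hbm); apply: (by_multiple (-1/2) _ _ _ e1); field.
subst p.
have hq : q = 3 * m / 8.
  by apply: (mulfI hbm); apply: (by_multiple (-1/2) _ _ _ e2); field.
subst q.
have hga : ga = -2 * be - 3 * m / 4.
  by apply: (mulfI hc); apply: (by_multiple (-1) _ _ _ e5); field.
subst ga.
apply: (cubic_pencil_system hm).
- by apply: (mulfI hc); rewrite mulr0; apply: (by_multiple (-64) _ _ _ e4); field.
- by apply: (mulfI hc); rewrite mulr0; apply: (by_multiple 8 _ _ _ e3); field.
Qed.

Lemma cube_square_pencil (A B C t1 t2 t3 z w : R) : A != 0 -> C != 0 ->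
  (forall s, C * (s - 1) ^+ 3 * (s - z) ^+ 2 * (s - w)
             = A * s ^+ 3 + B * ((s - t1) * (s - t2) * (s - t3)) ^+ 2) -> z = 0.
Proof.
move=> hA hC H.
pose w1 := 1 - t1; pose w2 := 1 - t2; pose w3 := 1 - t3.
suff : z - 1 = -1 by move/eqP; rewrite subr_eq addNr => /eqP.
apply: (@cubic_pencil_double_root A B C (w1 * w2 * w3) (w1 * w2 + w1 * w3 + w2 * w3)
  (w1 + w2 + w3) _ (w - 1) hA hC) => u.
transitivity (A * (1 + u) ^+ 3 + B * ((1 + u - t1) * (1 + u - t2) * (1 + u - t3)) ^+ 2).
  by rewrite /w1 /w2 /w3; ring.
by rewrite -H; ring.
Qed.

Lemma linear_forms_pencil (A B C k u1 v1 u2 v2 u3 v3 uz vz uw vw : R) :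
  A != 0 -> C != 0 -> k != 0 -> u1 != 0 -> u2 != 0 -> u3 != 0 -> uz != 0 -> uw != 0 ->
  (forall s, C * (k * s - k) ^+ 3 * (uz * s - vz) ^+ 2 * (uw * s - vw)
     = A * s ^+ 3 + B * ((u1 * s - v1) * (u2 * s - v2) * (u3 * s - v3)) ^+ 2) ->
  vz = 0.
Proof.
move=> hA hC hk h1 h2 h3 hz hw H.
have hC' : C * k ^+ 3 * uz ^+ 2 * uw != 0 by rewrite !mulf_neq0 ?expf_neq0.
suff /eqP : vz / uz = 0 by rewrite mulf_eq0 invr_eq0 (negbTE hz) orbF => /eqP.
apply: (cube_square_pencil (B := B * (u1 * u2 * u3) ^+ 2)
  (t1 := v1 / u1) (t2 := v2 / u2) (t3 := v3 / u3) (w := vw / uw) hA hC') => s.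
transitivity (C * (k * s - k) ^+ 3 * (uz * s - vz) ^+ 2 * (uw * s - vw)).
  by field; rewrite hz hw.
by rewrite H; field; rewrite h1 h2 h3.
Qed.

End CharacteristicZero.

Section BinaryForms.
Variable K : closedFieldType.
Implicit Types (p : {poly K}) (x y : option K).

Definition homog d p (X Y : K) : K := \sum_(i < d.+1) p`_i * X ^+ i * Y ^+ (d - i).

Definition linform x (X Y : K) : K := if x is Some z then X - z * Y else Y.

Definition coordX x : K := if x is Some z then z else 1.
Definition coordY x : K := if x is Some _ then 1 else 0.
Definition linform_at x y : K := linform x (coordX y) (coordY y).

Definition homog_mult d p x : nat :=
  if x is Some z then mup z p else (d - (size p).-1)%N.

Lemma homog_lin d p1 p2 a b X Y :
  homog d (a *: p1 + b *: p2) X Y = a * homog d p1 X Y + b * homog d p2 X Y.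
Proof.
rewrite /homog !mulr_sumr -big_split; apply: eq_bigr => i _.
by rewrite coefD !coefZ /=; ring.
Qed.

Lemma homog_horner d p X Y : (size p <= d.+1)%N -> Y != 0 ->
  homog d p X Y = Y ^+ d * p.[X / Y].
Proof.
move=> hs hY; rewrite (horner_coef_wide _ hs) mulr_sumr /homog.
apply: eq_bigr => i _.
have hYi : Y ^+ i != 0 by rewrite expf_neq0.
have -> : Y ^+ d = Y ^+ (d - i) * Y ^+ i by rewrite -exprD subnK // -ltnS.
rewrite expr_div_n; field; exact: hYi.
Qed.

Lemma homog_Y0 d p X : homog d p X 0 = p`_d * X ^+ d.
Proof.
rewrite /homog big_ord_recr /= subnn expr0 mulr1 big1 ?add0r // => i _.
by rewrite expr0n subn_eq0 leqNgt ltn_ord mulr0.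
Qed.

Lemma homog_scale_prod d c (rs : seq K) X Y : (size rs <= d)%N ->
  homog d (c *: \prod_(r <- rs) ('X - r%:P)) X Y
  = c * Y ^+ (d - size rs) * \prod_(r <- rs) (X - r * Y).
Proof.
move=> hs; have hsz := size_prod_XsubC rs id.
have [->|hY] := eqVneq Y 0.
  rewrite homog_Y0 coefZ.
  under [X in _ = _ * X]eq_bigr do rewrite mulr0 subr0.
  rewrite big_const_seq count_predT iter_mulr_1.
  have [hlt|] := ltnP (size rs) d.
    by rewrite nth_default ?hsz // expr0n subn_eq0 leqNgt hlt !mulr0 !mul0r.
  move=> hge; have <- : size rs = d by apply/eqP; rewrite eqn_leq hs hge.
  have /monicP : \prod_(r <- rs) ('X - r%:P) \is monic by apply: monic_prod_XsubC.
  by rewrite lead_coefE hsz /= => ->; rewrite subnn expr0; ring.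
rewrite homog_horner ?hY //; last by rewrite (leq_trans (size_scale_leq _ _)) // hsz.
rewrite hornerZ horner_prod.
under eq_bigr do rewrite hornerXsubC.
rewrite [in RHS](eq_bigr (fun r => Y * (X / Y - r))); last by move=> r _; field.
rewrite big_split /= big_const_seq count_predT iter_mulr_1 -{1}(subnK hs) exprD; ring.
Qed.

Lemma homog_factor d p xs : p != 0 -> (size p <= d.+1)%N -> uniq xs ->
  (forall x, x \in xs <-> (0 < homog_mult d p x)%N) ->
  forall X Y, homog d p X Y = lead_coef p * \prod_(x <- xs) linform x X Y ^+ homog_mult d p x.
Proof.
move=> hp hs hxs hsupp X Y.
have [rs Hrs] := closed_field_poly_normal p.
have hsz : size p = (size rs).+1.
  by rewrite Hrs size_scale ?lead_coef_eq0 // size_prod_XsubC.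
(* the zeros of [p] in P^1, listed with multiplicity *)
pose l := map Some rs ++ nseq (d - size rs) None.
have count_l x : count_mem x l = homog_mult d p x.
  rewrite count_cat count_nseq count_map; case: x => [z|] /=.
    rewrite mul0n addn0 Hrs -mul_polyC mupMr ?rootC ?lead_coef_eq0 // mu_prod_XsubC.
    by apply: eq_count => r; apply: inj_eq; apply: Some_inj.
  by rewrite (@eq_count _ _ pred0) ?count_pred0 ?hsz /= ?mul1n.
have perm_xs : perm_eq xs (undup l).
  apply: uniq_perm => //; first exact: undup_uniq.
  move=> x; rewrite mem_undup -[x \in l]has_pred1 has_count count_l.
  by apply/idP/idP => /hsupp.
under eq_bigr do rewrite -count_l.
rewrite (perm_big _ perm_xs).
rewrite prodr_undup_exp_count big_cat big_map big_nseq iter_mulr_1 /=.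
rewrite {1}Hrs homog_scale_prod; first by ring.
by rewrite -ltnS -hsz.
Qed.

Lemma linform_comb x a b y y' :
  linform x (a * coordX y + b * coordX y') (a * coordY y + b * coordY y')
  = a * linform_at x y + b * linform_at x y'.
Proof. by case: x => [z|]; rewrite /linform_at /=; ring. Qed.

Lemma linform_at_eq0 x y : (linform_at x y == 0) = (x == y).
Proof.
case: x => [z|]; case: y => [t|]; rewrite /linform_at /= ?mulr1 ?mulr0 ?subr0 ?oner_eq0 ?eqxx //.
by rewrite subr_eq0 eq_sym; apply/eqP/eqP => [->|[->]].
Qed.

Lemma linform_at_id x : linform_at x x = 0.
Proof. by apply/eqP; rewrite linform_at_eq0. Qed.

Lemma linform_eq0_distinct x y (X Y : K) : x != y ->
  linform x X Y = 0 -> linform y X Y = 0 -> X = 0 /\ Y = 0.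
Proof.
case: x => [a|]; case: y => [b|] //= hxy.
- move=> ha hb; have hba : b - a != 0 by rewrite subr_eq0; apply: contraNneq hxy => ->.
  have /eqP : (b - a) * Y = 0 by rewrite -[RHS](subrr 0) -{1}ha -hb; ring.
  rewrite mulf_eq0 (negbTE hba) /= => /eqP hY.
  by split=> //; move: ha; rewrite hY mulr0 subr0.
- by move=> + hY; rewrite hY mulr0 subr0.
- by move=> hY; rewrite hY mulr0 subr0.
Qed.

End BinaryForms.

Lemma binary_forms_pencil (al be cp cq cr : CC) (x1 x2 y1 y2 y3 z1 z2 z3 : P1) :
  al != 0 -> cp != 0 -> cr != 0 -> x1 != x2 -> z1 != x1 -> z1 != x2 -> z2 != x2 ->
  z3 != x2 -> y1 != x2 -> y2 != x2 -> y3 != x2 ->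
  (forall X Y, cr * (linform z1 X Y ^+ 3 * linform z2 X Y ^+ 2 * linform z3 X Y)
     = al * cp * (linform x1 X Y * linform x2 X Y) ^+ 3
       + be * cq * (linform y1 X Y * linform y2 X Y * linform y3 X Y) ^+ 2) ->
  z2 = x1.
Proof.
move=> hal hcp hcr x1x2 z1x1 z1x2 z2x2 z3x2 y1x2 y2x2 y3x2 H.
have x2x1 : x2 != x1 by rewrite eq_sym.
(* the coordinate [s] in which x1, x2 and z1 are 0, infinity and 1 *)
pose u x := linform_at z1 x1 * linform_at x x2.
pose v x := linform_at z1 x2 * linform_at x x1.
suff /eqP : v z2 = 0 by rewrite mulf_eq0 !linform_at_eq0 (negbTE z1x2) => /eqP.
apply: (linear_forms_pencil (A := al * cp * (u x1 * - v x2) ^+ 3) (B := be * cq) (C := cr)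
  (k := u z1) (u1 := u y1) (v1 := v y1) (u2 := u y2) (v2 := v y2) (u3 := u y3) (v3 := v y3)
  (uz := u z2) (uw := u z3) (vw := v z3)).
all: try by rewrite ?mulf_neq0 ?expf_neq0 ?oppr_eq0 ?mulf_neq0 ?linform_at_eq0.
move=> s; have := H (s * linform_at z1 x1 * coordX x2 + - linform_at z1 x2 * coordX x1)
                    (s * linform_at z1 x1 * coordY x2 + - linform_at z1 x2 * coordY x1).
rewrite !linform_comb !linform_at_id => Hs.
by apply: etrans (etrans Hs _); rewrite /u /v; ring.
Qed.

Section Fibres.
Variables (P Q : {poly CC}) (d : nat).
Hypothesis hPQ : is_morphism_of_degree P Q d.

Lemma horner_fibre_poly w z : (fibre_poly P Q w).[z] = linform w P.[z] Q.[z].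
Proof. by case: w => [a|] //=; rewrite hornerD hornerN hornerM hornerC. Qed.

Lemma coef_fibre_poly w i : (fibre_poly P Q w)`_i = linform w P`_i Q`_i.
Proof. by case: w => [a|] //=; rewrite coefB coefCM. Qed.

Lemma size_PQ_le : (size P <= d.+1)%N /\ (size Q <= d.+1)%N.
Proof. by case: hPQ => _ hm; rewrite -hm leq_maxl leq_maxr. Qed.

Lemma fibre_poly_size w : (size (fibre_poly P Q w) <= d.+1)%N.
Proof.
have [sP sQ] := size_PQ_le; case: w => [a|] //=.
rewrite (leq_trans (size_polyD _ _)) // geq_max sP size_polyN mul_polyC.
exact: leq_trans (size_scale_leq _ _) sQ.
Qed.

Lemma no_common_root z : P.[z] = 0 -> Q.[z] = 0 -> False.
Proof.
case: hPQ => hcop _ hP /eqP; apply/negP.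
by apply: coprimep_root hcop _; apply/eqP.
Qed.

Lemma fibre_poly_neq0 w : (0 < d)%N -> fibre_poly P Q w != 0.
Proof.
case: hPQ => _ hm hd; apply/negP => /eqP h0; case: w h0 => [a|] /= h0.
  have eP : P = a%:P * Q by apply/eqP; rewrite -subr_eq0 h0.
  have [z /eqP hz] : exists z, root Q z.
    apply/closed_rootP; apply: contraTneq hd => hQ.
    have : (maxn (size P) (size Q) <= 1)%N.
      by rewrite geq_max hQ andbT eP mul_polyC (leq_trans (size_scale_leq _ _)) ?hQ.
    by rewrite hm ltnS leqn0 => /eqP ->.
  by apply: (no_common_root _ hz); rewrite eP hornerM hz mulr0.
have [z /eqP hz] : exists z, root P z.
  by apply/closed_rootP; move: hm; rewrite h0 size_poly0 maxn0 => ->; rewrite eqSS -lt0n.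
by apply: (no_common_root hz); rewrite h0 horner0.
Qed.

Lemma fibre_unique w w' x :
  (0 < local_mult P Q d w x)%N -> (0 < local_mult P Q d w' x)%N -> w = w'.
Proof.
case: (eqVneq w w') => // hne; case: x => [z|] /= hw hw'.
  have root_of u : (0 < mup z (fibre_poly P Q u))%N -> linform u P.[z] Q.[z] = 0.
    move=> h; rewrite -horner_fibre_poly; apply/eqP.
    by apply: contraLR h => /mupNroot ->.
  have [hP hQ] := linform_eq0_distinct hne (root_of _ hw) (root_of _ hw').
  by case: (no_common_root hP hQ).
have top_of u : (0 < d - (size (fibre_poly P Q u)).-1)%N -> linform u P`_d Q`_d = 0.
  move=> h; rewrite -coef_fibre_poly nth_default //.
  by move: h; rewrite subn_gt0; case: size.
have [hP hQ] := linform_eq0_distinct hne (top_of _ hw) (top_of _ hw').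
have [sP sQ] := size_PQ_le; case: hPQ => _ hm.
have : (maxn (size P) (size Q) <= d)%N.
  by rewrite geq_max (size_le_of_coef_eq0 sP hP) (size_le_of_coef_eq0 sQ hQ).
by rewrite hm ltnn.
Qed.

Lemma fibre_pencil p q r : p <> q -> q <> r -> p <> r ->
  exists al be, al != 0 /\ fibre_poly P Q r = al *: fibre_poly P Q p + be *: fibre_poly P Q q.
Proof.
have neq (a b : CC) : Some a <> Some b -> a - b != 0.
  by move=> h; rewrite subr_eq0; apply/eqP => e; apply: h; rewrite e.
case: p => [a|]; case: q => [b|]; case: r => [c|] //= hpq hqr hpr.
- have hab := neq _ _ hpq; exists ((c - b) / (a - b)), ((a - c) / (a - b)); split.
    by rewrite mulf_neq0 ?invr_eq0 // -oppr_eq0 opprB neq.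
  by apply/polyP => i; rewrite !(coefB, coefD, coefN, coefZ, coefCM); field.
- have hab := neq _ _ hpq; exists (- (a - b)^-1), ((a - b)^-1); split.
    by rewrite oppr_eq0 invr_eq0.
  by apply/polyP => i; rewrite !(coefB, coefD, coefN, coefZ, coefCM); field.
- exists 1, (a - c); split; first exact: oner_neq0.
  by apply/polyP => i; rewrite !(coefB, coefD, coefN, coefZ, coefCM); ring.
- exists (b - c), 1; split; first exact: neq.
  by apply/polyP => i; rewrite !(coefB, coefD, coefN, coefZ, coefCM); ring.
Qed.

Lemma ramification_factor w ns : (0 < d)%N -> has_ramification P Q d w ns ->
  exists2 xs, [seq local_mult P Q d w x | x <- xs] = ns &
    uniq xs /\ forall X Y, homog d (fibre_poly P Q w) X Y
      = lead_coef (fibre_poly P Q w) * \prod_(x <- xs) linform x X Y ^+ local_mult P Q d w x.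
Proof.
move=> hd [xs [hxs hsupp /perm_map_lift [ys hperm hys]]].
have uys : uniq ys by rewrite -(perm_uniq hperm).
exists ys => //; split => //.
(* [local_mult P Q d w] unfolds to [homog_mult d (fibre_poly P Q w)] *)
apply: homog_factor => //; [exact: fibre_poly_neq0 | exact: fibre_poly_size |].
by move=> x; rewrite -(perm_mem hperm); apply: hsupp.
Qed.

End Fibres.

Theorem mainTheorem3 :
  ~ exists (P Q : {poly CC}) (p q r : P1),
      [/\ is_morphism_of_degree P Q 6,
          [/\ p <> q, q <> r & p <> r],
          has_ramification P Q 6 p [:: 3; 3]%N,
          has_ramification P Q 6 q [:: 2; 2; 2]%N &
          has_ramification P Q 6 r [:: 3; 2; 1]%N].
Proof.
case=> P [Q [p [q [r [hPQ [hpq hqr hpr] Hp Hq Hr]]]]].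
have [[|x1 [|x2 []]] // [hx1 hx2] [ux Fp]] := ramification_factor hPQ (isT : 0 < 6)%N Hp.
have [[|y1 [|y2 [|y3 []]]] // [hy1 hy2 hy3] [_ Fq]] := ramification_factor hPQ (isT : 0 < 6)%N Hq.
have [[|z1 [|z2 [|z3 []]]] // [hz1 hz2 hz3] [_ Fr]] := ramification_factor hPQ (isT : 0 < 6)%N Hr.
have [al [be [hal pencil]]] := fibre_pencil P Q hpq hqr hpr.
have apart_p w x x' : w <> p -> (0 < local_mult P Q 6 w x)%N -> x' \in [:: x1; x2] -> x != x'.
  move=> hw hx hx'; apply/eqP => exx'; apply: hw; apply: (fibre_unique hPQ hx).
  by move: hx'; rewrite exx' !inE => /orP[] /eqP ->; rewrite ?hx1 ?hx2.
have z2x1 : z2 != x1 by apply: (apart_p r); rewrite ?hz2 ?inE ?eqxx //; apply: nesym.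
apply: (negP z2x1); apply/eqP.
apply: (@binary_forms_pencil al be (lead_coef (fibre_poly P Q p)) (lead_coef (fibre_poly P Q q))
  (lead_coef (fibre_poly P Q r)) x1 x2 y1 y2 y3 z1 z2 z3 hal).
all: rewrite ?lead_coef_eq0 ?(fibre_poly_neq0 hPQ) //.
all: try by apply: (apart_p r); rewrite ?hz1 ?hz2 ?hz3 ?inE ?eqxx ?orbT //; apply: nesym.
all: try by apply: (apart_p q); rewrite ?hy1 ?hy2 ?hy3 ?inE ?eqxx ?orbT //; apply: nesym.
- by move: ux; rewrite /= inE andbT.
- move=> X Y; have := congr1 (fun F => homog 6 F X Y) pencil.
  rewrite /= homog_lin Fr Fp Fq !big_cons !big_nil hx1 hx2 hy1 hy2 hy3 hz1 hz2 hz3 => E.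
  by apply: etrans (etrans E _); ring.
Qed.
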